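(* Let $\Sigma=(X,U,F)$ be a system and $Q\subset X$ a controlled invariant set. If $K\subset Q$ and $K=\bigcup_{i=1}^m K_i$ with nonempty $K_1,\dots,K_m$, then \[h_{inv}(K,Q)=\max_{i=1,\ldots,m}h_{inv}(K_i,Q).\]
   Context: A system is a triple $\Sigma=(X,U,F)$ where $X,U$ are nonempty sets and $F:X\times U\rightrightarrows X$ is a set-valued map with $F(x,u)\neq\emptyset$ for all $(x,u)$. For $A\subset X$ and $u\in U$, $F(A,u)=\bigcup_{x\in A}F(x,u)$. A set $Q\subset X$ is controlled invariant if for every $x\in Q$ there is $u\in U$ with $F(x,u)\subset Q$. For $u\in U$ put $Q_u=\{x\in Q: F(x,u)\subset Q\}$. Elements of $U^n$ are written $\omega=\omega_0\omega_1\cdots\omega_{n-1}$, and $\omega_{[0,i]}=\omega_0\cdots\omega_i$. A set $S\subset U^n$ is an admissible family of length $n$ for $Q$ if (a) $\omega'_0=\omega''_0$ for all $\omega',\omega''\in S$, and (b) there exists $x\in Q$ such that for every $\omega\in S$, with $I^0_\omega(x)=\{x\}$: for all $i=0,1,\dots,n-2$, $F(I^i_\omega(x),\omega_i)\subset\bigcup_{\omega'\in S,\ \omega'_{[0,i]}=\omega_{[0,i]}}Q_{\omega'_{i+1}}$ and $I^{i+1}_\omega(x):=F(I^i_\omega(x),\omega_i)\cap Q_{\omega_{i+1}}\neq\emptyset$; and $I^n_\omega(x):=F(I^{n-1}_\omega(x),\omega_{n-1})\subset Q$. Let $AF^n(Q)$ be the set of admissible families of length $n$ for $Q$, and for $S\in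 AF^n(Q)$ let $Q_S$ be the set of all $x\in Q$ satisfying (b). For nonempty $K\subset Q$, a set $\mathscr{S}\subset U^n$ is $(n,K,Q)$-spanning if $K\subset\bigcup_{S\subset\mathscr{S},\,S\in AF^n(Q)}Q_S$. Let $r_{inv}(n,K,Q)=\inf\{\sharp\mathscr{S}:\mathscr{S}\text{ is }(n,K,Q)\text{-spanning}\}$ (with $\inf\emptyset=\infty$), and the invariance entropy $h_{inv}(K,Q)=\limsup_{n\to\infty}\frac1n\log r_{inv}(n,K,Q)$, where $\log$ is base $2$. *)

From HB Require Import structures.
From mathcomp Require Import all_boot all_order all_algebra.
From mathcomp Require Import all_classical all_reals all_analysis.
Set Implicit Arguments. Unset Strict Implicit. Unset Printing Implicit Defensive.
Import Order.TTheory GRing.Theory Num.Theory.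
Local Open Scope classical_set_scope.
Local Open Scope ring_scope.

Section InvarianceEntropy.
Variables (R : realType) (X U : Type) (F : X -> U -> set X).

Definition Fimg (A : set X) (u : U) : set X := [set y | exists2 z, A z & F z u y].

Definition controlled_invariant (Q : set X) : Prop :=
  forall x, Q x -> exists u : U, F x u `<=` Q.

Definition Qsub (Q : set X) (u : U) : set X := [set x | Q x /\ F x u `<=` Q].

(* words of length n are maps 'I_n -> U; letter at a nat position (None if out of range) *)
Definition wat n (w : 'I_n -> U) (i : nat) : option U := omap w (insub i).

(* I^i_w(x) for i = 0, ..., n-1 :
   I^0 = {x},  I^{i+1} = F(I^i, w_i) \cap Q_{w_{i+1}} *)
Fixpoint Iset (Q : set X) n (w : 'I_n -> U) (x : X) (i : nat) : set X :=
  match i with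
  | 0 => [set x]
  | i'.+1 => [set y | exists u v, wat w i' = Some u /\ wat w i'.+1 = Some v /\
                       Fimg (Iset Q w x i') u y /\ Qsub Q v y]
  end.

Definition adm_point (Q : set X) n (S : set ('I_n -> U)) (x : X) : Prop :=
  Q x /\
  forall w, S w ->
    (forall i : nat, (i.+1 < n)%N -> forall u, wat w i = Some u ->
       Fimg (Iset Q w x i) u `<=`
         [set y | exists2 w', (S w' /\ forall j : 'I_n, (j <= i)%N -> w' j = w j) &
                    exists v, wat w' i.+1 = Some v /\ Qsub Q v y]
       /\ Iset Q w x i.+1 !=set0)
    /\ (forall u, wat w n.-1 = Some u -> Fimg (Iset Q w x n.-1) u `<=` Q).

Definition admissible (Q : set X) n (S : set ('I_n -> U)) : Prop :=
  S !=set0 /\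
  (forall w' w'', S w' -> S w'' -> wat w' 0 = wat w'' 0) /\
  exists x, adm_point Q S x.

Definition QS (Q : set X) n (S : set ('I_n -> U)) : set X := [set x | adm_point Q S x].

Definition spanning n (K Q : set X) (Sc : set ('I_n -> U)) : Prop :=
  K `<=` [set x | exists S, S `<=` Sc /\ admissible Q S /\ QS Q S x].

(* r_inv(n,K,Q): infimum of the cardinalities of spanning sets
   (infinite spanning sets have cardinality +oo; inf of the empty set is +oo) *)
Definition r_inv n (K Q : set X) : \bar R :=
  ereal_inf [set (k%:R)%:E | k in [set k : nat |
     exists Sc : set ('I_n -> U), spanning K Q Sc /\ (Sc #= `I_k)%card]].

Definition elog2 (r : \bar R) : \bar R :=
  match r with
  | x%:E => (ln x / ln 2)%:E
  | +oo%E => +oo%E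
  | -oo%E => -oo%E
  end.

Definition h_inv (K Q : set X) : \bar R :=
  limn_esup (fun n : nat => ((n%:R)^-1)%:E * elog2 (r_inv n K Q))%E.

End InvarianceEntropy.

From mathcomp Require Import all_boot all_order all_algebra.
From mathcomp Require Import all_classical all_reals all_analysis.
From mathcomp Require Import zify.
Import Order.TTheory GRing.Theory Num.Theory.
Local Open Scope classical_set_scope.
Local Open Scope ring_scope.

(* Monotonicity of [r_inv] in [K] gives [h_inv (Ks i) Q <= h_inv K Q].
   Conversely, the union of spanning sets for the [Ks i] spans [K], so
   [r_inv n K Q <= m * max_i r_inv n (Ks i) Q]. After taking [n^-1 log2],
   the extra term [log2 m / n] vanishes, and the limsup of a pointwise maximum
   of finitely many sequences is at most the maximum of their limsups. *)

Section limn_esup_bounds.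
Context {R : realType}.
Implicit Types (u v : (\bar R)^nat) (x y : \bar R).
Local Open Scope ereal_scope.

Lemma le_limn_esup u v : (forall n, u n <= v n) -> limn_esup u <= limn_esup v.
Proof.
move=> uv; apply: le_ereal_inf_tmp => _ [V FV <-].
apply: le_trans (ereal_inf_lbound _) _; first by exists V.
apply: ge_ereal_sup => _ [n Vn <-].
by apply: le_trans (uv n) _; apply: ereal_sup_ubound; exists n.
Qed.

Lemma limn_esup_le_near u y : (\forall n \near \oo, u n <= y) -> limn_esup u <= y.
Proof.
move=> uy; apply: le_trans (ereal_inf_lbound _) _.
  by exists [set n | u n <= y].
by apply: ge_ereal_sup => _ [n + <-].
Qed.

Lemma limn_esup_lt_near u y : limn_esup u < y -> \forall n \near \oo, u n < y.
Proof.
move=> /ereal_inf_lt [_ [V FV <-] supVy].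
apply: filterS FV => n Vn; apply: le_lt_trans supVy.
by apply: ereal_sup_ubound; exists n.
Qed.

Lemma lte_EFin_dense y (r : R) : y < r%:E -> exists2 s : R, y < s%:E & (s < r)%R.
Proof.
case: y => [x| |] //= xr.
  by exists ((x + r) / 2)%R; rewrite ?lte_fin midf_lt // -lte_fin.
by exists (r - 1)%R; rewrite ?ltNyr // gtrDl oppr_lt0 ltr01.
Qed.

Lemma lee_EFin_gt x y : (forall r : R, y < r%:E -> x <= r%:E) -> x <= y.
Proof.
case: y => [y| |] xy; last 1 first.
- case: x xy => [x| |] // xy.
  + by have := xy (x - 1)%R (ltNyr _); rewrite lee_fin lerBrDr gerDl ler10.
  + by have := xy 0%R (ltNyr _).
- by apply/lee_addgt0Pr => e e0; apply: xy; rewrite lte_fin ltrDl.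
- exact: leey.
Qed.

Lemma limn_esup_le_bigmax m u (v : 'I_m -> (\bar R)^nat) (e : R^nat) :
  e @ \oo --> 0%R ->
  (\forall n \near \oo, exists i, u n <= (e n)%:E + v i n) ->
  limn_esup u <= \big[maxe/-oo]_(i < m) limn_esup (v i).
Proof.
move=> e0 uv; apply: lee_EFin_gt => r /lte_EFin_dense [s maxs sr].
have v_lt_s : \forall n \near \oo, forall i, v i n < s%:E.
  apply: filter_forall => i; apply: limn_esup_lt_near.
  exact: le_lt_trans (le_bigmax _ _ i) maxs.
have e_lt : \forall n \near \oo, (e n < r - s)%R.
  by apply: cvgr_lt e0 _ _; rewrite subr_gt0.
apply: limn_esup_le_near; near=> n.
have vs : forall i, v i n < s%:E by near: n.
have es : (e n < r - s)%R by near: n.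
have [i uvi] : exists i, u n <= (e n)%:E + v i n by near: n.
apply/(le_trans uvi)/ltW.
by rewrite -(subrK s r) EFinD lteD // lte_fin.
Unshelve. all: by end_near.
Qed.

End limn_esup_bounds.

Section extended_naturals.
Context {R : realType}.
Local Open Scope ereal_scope.

Definition is_enat (a : \bar R) : Prop := a = +oo \/ exists k : nat, a = k%:R%:E.

Lemma ereal_inf_nat_attained (P : set nat) :
  ereal_inf [set (k%:R : R)%:E | k in P] = +oo \/
  exists2 k, P k & ereal_inf [set (k%:R : R)%:E | k in P] = k%:R%:E.
Proof.
have [P_ex|noP] := pselect (exists k, `[< P k >]); last first.
  left; apply/eqP; rewrite eq_le leey /=.
  by apply: le_ereal_inf_tmp => _ [k Pk <-]; case: noP; exists k; apply/asboolP.
case: (ex_minnP P_ex) => k0 /asboolP Pk0 k0_min.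
right; exists k0 => //; apply/eqP; rewrite eq_le ereal_inf_lbound; last by exists k0.
apply: le_ereal_inf_tmp => _ [k Pk <-].
by rewrite lee_fin ler_nat k0_min //; apply/asboolP.
Qed.

(* The next lemmas hold at [0] thanks to the junk value [ln 0 = 0]. *)
Lemma ln_nat_ge0 k : (0 <= ln (k%:R : R))%R.
Proof. by case: k => [|k]; [rewrite ln0 | apply: ln_ge0; rewrite ler1n]. Qed.

Lemma ln_nat_le k l : (k <= l)%N -> (ln (k%:R : R) <= ln (l%:R : R))%R.
Proof.
case: k => [|k] kl; first by rewrite ln0 // ln_nat_ge0.
by rewrite ler_ln ?ler_nat // posrE ltr0n // (leq_trans _ kl).
Qed.

Lemma ln_natM_le k l : (ln ((k * l)%:R : R) <= ln (k%:R : R) + ln (l%:R : R))%R.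
Proof.
have [->|k0] := posnP k; first by rewrite mul0n ln0 // add0r ln_nat_ge0.
have [->|l0] := posnP l; first by rewrite muln0 ln0 // addr0 ln_nat_ge0.
by rewrite natrM lnM ?posrE ?ltr0n.
Qed.

Lemma ln2_gt0 : (0 < ln (2 : R))%R.
Proof. by rewrite ln_gt0 // ltr1n. Qed.

Lemma elog2_le a b : is_enat a -> is_enat b -> a <= b -> elog2 a <= elog2 b.
Proof.
move=> [->|[k ->]] [->|[l ->]] //=; rewrite ?leey // !lee_fin ler_nat => kl.
by rewrite ler_pM2r ?invr_gt0 ?ln2_gt0 ?ln_nat_le.
Qed.

Lemma elog2_le_natM m a b : is_enat a -> is_enat b -> a <= m%:R%:E * b ->
  elog2 a <= elog2 m%:R%:E + elog2 b.
Proof.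
move=> [->|[k ->]] [->|[l ->]] //=; rewrite ?addey ?leey //.
rewrite -EFinM -natrM !lee_fin ler_nat -mulrDl => kml.
by rewrite ler_pM2r ?invr_gt0 ?ln2_gt0 // (le_trans (ln_nat_le _ _ kml)) ?ln_natM_le.
Qed.

End extended_naturals.

Lemma card_bigcup_le T m k (A : 'I_m -> set T) :
  (forall i, (A i #<= `I_k)%card) ->
  (\bigcup_(i in [set: 'I_m]) A i #<= `I_(m * k))%card.
Proof.
elim/Ppointed: T => T in A *; first by rewrite emptyE.
case: m A => [A _|m A Ak].
  by rewrite II0 card_le0; apply/eqP/bigcup0 => -[].
have /choice [g gA] i : exists g, set_surj `I_k (A i) g by exact/pcard_surjP.
apply/pcard_surjP; exists (fun p => g (inord (p %/ k)%N) (p %% k)%N).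
move=> t [i _ /gA [j /= jk <-]].
have k0 : (0 < k)%N by lia.
exists (i * k + j)%N; first by have := ltn_ord i; rewrite /=; nia.
by rewrite divnMDl // divn_small // addn0 modnMDl modn_small // inord_val.
Qed.

Section invariance_entropy.
Context {R : realType} {X U : Type} (F : X -> U -> set X) (Q : set X).
Local Open Scope ereal_scope.

Lemma spanning_bigcup n m (K : set X) (Ks : 'I_m -> set X)
    (Sc : 'I_m -> set ('I_n -> U)) :
  K `<=` \bigcup_(i in [set: 'I_m]) Ks i ->
  (forall i, spanning F (Ks i) Q (Sc i)) ->
  spanning F K Q (\bigcup_(i in [set: 'I_m]) Sc i).
Proof.
move=> KKs KSc x /KKs [i _ /KSc [S [SSc admS]]].
by exists S; split => // w /SSc Scw; exists i.
Qed.

Lemma r_inv_attained n K : r_inv R F n K Q = +oo \/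
  exists2 k, (exists Sc : set ('I_n -> U), spanning F K Q Sc /\ (Sc #= `I_k)%card) &
             r_inv R F n K Q = k%:R%:E.
Proof. exact: ereal_inf_nat_attained. Qed.

Lemma r_inv_le_natP n K k :
  r_inv R F n K Q <= k%:R%:E <->
  exists2 Sc : set ('I_n -> U), spanning F K Q Sc & (Sc #<= `I_k)%card.
Proof.
split.
  case: (r_inv_attained n K) => [-> //|[l [Sc [KSc Scl]] ->]].
  by rewrite lee_fin ler_nat => lk; exists Sc; rewrite // (card_le_eql Scl) card_le_II.
move=> [Sc KSc Sck].
have /finite_setP [l Scl] := card_le_finite Sck (finite_II k).
apply: le_trans (_ : (l%:R)%:E <= _).
  by apply: ereal_inf_lbound; exists l => //; exists Sc.
by rewrite lee_fin ler_nat -card_le_II -(card_le_eql Scl).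
Qed.

Lemma r_inv_enat n K : is_enat (r_inv R F n K Q).
Proof. by case: (r_inv_attained n K) => [|[k _ ->]]; [left|right; exists k]. Qed.

Lemma subset_r_inv_le n K1 K2 : K1 `<=` K2 -> r_inv R F n K1 Q <= r_inv R F n K2 Q.
Proof.
move=> K12; apply: le_ereal_inf => _ [k [Sc [KSc Sck]] <-].
by exists k => //; exists Sc; split => // x /K12 /KSc.
Qed.

Lemma r_inv_bigcup_le n m K (Ks : 'I_m -> set X) k :
  K `<=` \bigcup_(i in [set: 'I_m]) Ks i ->
  (forall i, r_inv R F n (Ks i) Q <= k%:R%:E) ->
  r_inv R F n K Q <= (m * k)%:R%:E.
Proof.
move=> KKs Ksk.
have /choice [Sc ScP] i : exists Sc : set ('I_n -> U),
    spanning F (Ks i) Q Sc /\ (Sc #<= `I_k)%card.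
  by have /r_inv_le_natP [Sc] := Ksk i; exists Sc.
apply/r_inv_le_natP; exists (\bigcup_(i in [set: 'I_m]) Sc i).
- by apply: spanning_bigcup KKs _ => i; case: (ScP i).
- by apply: card_bigcup_le => i; case: (ScP i).
Qed.

Lemma r_inv_bigcup_le_max n m K (Ks : 'I_m -> set X) : (0 < m)%N ->
  K `<=` \bigcup_(i in [set: 'I_m]) Ks i ->
  exists i, r_inv R F n K Q <= m%:R%:E * r_inv R F n (Ks i) Q.
Proof.
move=> m0 KKs.
have [i _ imax] := @arg_maxP _ _ _ (Ordinal m0) predT (fun i => r_inv R F n (Ks i) Q) isT.
exists i; case: (r_inv_enat n (Ks i)) => [->|[k rk]].
  by rewrite gt0_muley ?leey // lte_fin ltr0n.
by rewrite rk -EFinM -natrM; apply: r_inv_bigcup_le KKs _ => j; rewrite -rk; exact: imax.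
Qed.

Lemma subset_h_inv_le K1 K2 : K1 `<=` K2 -> h_inv R F K1 Q <= h_inv R F K2 Q.
Proof.
move=> K12; apply: le_limn_esup => n.
apply: lee_wpmul2l; first by rewrite lee_fin invr_ge0.
by apply: elog2_le; [exact: r_inv_enat|exact: r_inv_enat|exact: subset_r_inv_le].
Qed.

Lemma h_inv_bigcup_le_bigmax m K (Ks : 'I_m -> set X) : (0 < m)%N ->
  K `<=` \bigcup_(i in [set: 'I_m]) Ks i ->
  h_inv R F K Q <= \big[maxe/-oo]_(i < m) h_inv R F (Ks i) Q.
Proof.
move=> m0 KKs; pose c := (ln (m%:R : R) / ln 2)%R.
apply: (@limn_esup_le_bigmax _ _ _ _ (fun n => n%:R^-1 * c)%R).
  rewrite -(mul0r c); apply: cvgMl.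
  by rewrite -(@cvg_shiftS R^o (fun n => (n%:R : R)^-1)%R); exact: cvg_harmonic.
apply: nearW => n; have [i rKi] := r_inv_bigcup_le_max n _ _ _ m0 KKs; exists i.
rewrite EFinM -muleDr //; apply: lee_wpmul2l; first by rewrite lee_fin invr_ge0.
by apply: elog2_le_natM rKi; exact: r_inv_enat.
Qed.

End invariance_entropy.

Theorem proposition2p7 (R : realType) (X U : Type) (F : X -> U -> set X)
  (Q K : set X) (m : nat) (Ks : 'I_m -> set X) :
  inhabited X -> inhabited U ->
  (forall x u, F x u !=set0) ->
  controlled_invariant F Q ->
  K `<=` Q ->
  (0 < m)%N ->
  K = \bigcup_(i in [set: 'I_m]) Ks i ->
  (forall i, Ks i !=set0) ->
  h_inv R F K Q = (\big[maxe/-oo]_(i < m) h_inv R F (Ks i) Q)%E.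
Proof.
move=> _ _ _ _ _ m0 KE _; apply/eqP.
rewrite eq_le h_inv_bigcup_le_bigmax //=; last by rewrite KE.
apply: bigmax_le => [|i _]; first exact: leNye.
by apply: subset_h_inv_le; rewrite KE; exact: bigcup_sup.
Qed.
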